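(* Let $(X,s)$ be a complete strong partial metric space, let $x_o\in X$, and let $f:X\to X$ be a Cauchy function at $x_o$. If $f$ is non-expansive, then $f$ has a fixed point.
   Context: A strong partial metric on $X$ is $s:X\times X\to\mathbb{R}$ with, for all $x,y,z$: $s(x,x)<s(x,y)$ whenever $x\neq y$; $s(x,y)=s(y,x)$; $s(x,y)\le s(x,z)+s(z,y)-s(z,z)$. A point $a$ is a limit of $\{x_i\}$ iff for every $\epsilon>0$ there is $N$ with $s(a,x_i)-s(a,a)<\epsilon$ for all $i>N$ (convergence in the topology generated by the balls $\{y\mid s(x,y)-s(x,x)<\epsilon\}$). $\{x_i\}$ is Cauchy with central distance $r$ if for every $\epsilon>0$ there is $N$ with $|s(x_i,x_j)-r|<\epsilon$ for $i\ge j>N$; a special limit is a limit $a$ with $s(a,a)=r$; $(X,s)$ is complete if every Cauchy sequence has a special limit. $f$ is a Cauchy function at $x_o$ if the orbit $\{f^i(x_o)\}$ ($f^0(x_o)=x_o$, $f^{i+1}(x_o)=f(f^i(x_o))$) is Cauchy. $f$ is non-expansive if $s(f(x),f(y))\le s(x,y)$ for all $x,y$. *)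

From Stdlib Require Import Reals.
Open Scope R_scope.

Definition strong_partial_metric {X : Type} (s : X -> X -> R) : Prop :=
  (forall x y : X, x <> y -> s x x < s x y) /\
  (forall x y : X, s x y = s y x) /\
  (forall x y z : X, s x y <= s x z + s z y - s z z).

Definition is_limit {X : Type} (s : X -> X -> R) (u : nat -> X) (a : X) : Prop :=
  forall eps : R, eps > 0 ->
    exists N : nat, forall i : nat, (i > N)%nat -> s a (u i) - s a a < eps.

Definition cauchy_with {X : Type} (s : X -> X -> R) (u : nat -> X) (r : R) : Prop :=
  forall eps : R, eps > 0 ->
    exists N : nat, forall i j : nat, (i >= j)%nat -> (j > N)%nat ->
      Rabs (s (u i) (u j) - r) < eps.

Definition is_cauchy {X : Type} (s : X -> X -> R) (u : nat -> X) : Prop :=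
  exists r : R, cauchy_with s u r.

Definition complete_spm {X : Type} (s : X -> X -> R) : Prop :=
  forall (u : nat -> X) (r : R), cauchy_with s u r ->
    exists a : X, is_limit s u a /\ s a a = r.

Definition orbit {X : Type} (f : X -> X) (x0 : X) : nat -> X :=
  fun i => Nat.iter i f x0.

Definition cauchy_function_at {X : Type} (s : X -> X -> R) (f : X -> X) (x0 : X) : Prop :=
  is_cauchy s (orbit f x0).

Definition non_expansive {X : Type} (s : X -> X -> R) (f : X -> X) : Prop :=
  forall x y : X, s (f x) (f y) <= s x y.

From Stdlib Require Import Reals Lra Lia Classical.
Open Scope R_scope.

(* Let [a] be a special limit of the orbit [x_i], so [s a a = r].  The triangle
   inequality through [x_(i+1) = f x_i] and non-expansiveness give
   [s a (f a) <= s a x_(i+1) + s a x_i - s x_(i+1) x_(i+1)], which tends to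
   [r + r - r = s a a].  In a strong partial metric only [a] itself is at
   self-distance from [a], so [f a = a]. *)

Section StrongPartialMetric.

Variables (X : Type) (s : X -> X -> R).
Hypothesis Hs : strong_partial_metric s.

Lemma spm_eq_of_le_self (x y : X) : s x y <= s x x -> x = y.
Proof.
  destruct Hs as [Hlt _].
  intros Hle. apply NNPP. intros Hxy.
  specialize (Hlt x y Hxy). lra.
Qed.

Lemma non_expansive_self_dist_le (f : X -> X) (a x : X) :
  non_expansive s f -> s a (f a) <= s a (f x) + s a x - s (f x) (f x).
Proof.
  destruct Hs as [_ [Hsym Htri]].
  intros Hne.
  pose proof (Htri a (f a) (f x)) as Hax.
  pose proof (Hne x a) as Hfx.
  rewrite (Hsym x a) in Hfx.
  lra.
Qed.

End StrongPartialMetric.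

Lemma cauchy_with_self_dist_gt {X : Type} (s : X -> X -> R) (u : nat -> X) (r : R) :
  cauchy_with s u r ->
  forall eps, eps > 0 -> exists N, forall i, (i > N)%nat -> r - eps < s (u i) (u i).
Proof.
  intros Hc eps Heps.
  destruct (Hc eps Heps) as [N HN].
  exists N. intros i Hi.
  pose proof (HN i i (Nat.le_refl i) Hi) as Hii.
  apply Rabs_def2 in Hii. lra.
Qed.

Lemma special_limit_orbit_self_dist_le {X : Type} (s : X -> X -> R) (f : X -> X)
    (x0 a : X) (r : R) :
  strong_partial_metric s -> non_expansive s f ->
  cauchy_with s (orbit f x0) r -> is_limit s (orbit f x0) a -> s a a = r ->
  s a (f a) <= s a a.
Proof.
  intros Hs Hne Hc Hlim Har.
  apply Rle_plus_epsilon. intros eps Heps.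
  assert (Heps3 : eps / 3 > 0) by lra.
  destruct (Hlim _ Heps3) as [N1 HN1].
  destruct (cauchy_with_self_dist_gt s _ r Hc _ Heps3) as [N2 HN2].
  set (i := S (Nat.max N1 N2)).
  pose proof (HN1 i ltac:(unfold i; lia)) as Hi.
  pose proof (HN1 (S i) ltac:(unfold i; lia)) as HSi.
  pose proof (HN2 (S i) ltac:(unfold i; lia)) as Hdiag.
  pose proof (non_expansive_self_dist_le X s Hs f a (orbit f x0 i) Hne) as Hle.
  change (f (orbit f x0 i)) with (orbit f x0 (S i)) in Hle.
  lra.
Qed.

Theorem theorem7p12 (X : Type) (s : X -> X -> R) (x0 : X) (f : X -> X) :
  strong_partial_metric s -> complete_spm s ->
  cauchy_function_at s f x0 -> non_expansive s f ->
  exists x : X, f x = x.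
Proof.
  intros Hs Hcomp [r Hc] Hne.
  destruct (Hcomp _ _ Hc) as [a [Hlim Har]].
  exists a. symmetry.
  apply (spm_eq_of_le_self X s Hs).
  exact (special_limit_orbit_self_dist_le s f x0 a r Hs Hne Hc Hlim Har).
Qed.
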